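(* Let $\varepsilon\in(0,1/2)$ and $\Delta\ge1$. Let $H=(V,E_H)$ be a multigraph with spanning forest $F_H$ (a maximal acyclic subset of $E_H$), let $e=(a,b)\notin E_H$ be an edge whose endpoints lie in the same tree of $F_H$, and suppose the endpoints of the edges of $(E_H\cup\{e\})\setminus F_H$ are distinct vertices any two of which are at distance at least $\Delta$ in $F_H$. Let $X\in\{0,1\}^V$ be uniform, $Z\in\{0,1\}^{E_H\cup\{e\}}$ have independent Bernoulli$(\varepsilon)$ entries independent of $X$, and $Y(f)=X(u)+X(v)+Z(f)\pmod 2$ for $f=(u,v)$. Let $r=|E_H\setminus F_H|$ and $\rho=(1-2\varepsilon)^\Delta$, and suppose $(1+\rho)^r<2$. Then for every $y\in\{0,1\}^{E_H}$ with $\Pr[Y|_{E_H}=y]>0$, $$\left|\Pr[Y(e)=0\mid Y|_{E_H}=y]-\tfrac12\right|\le\frac{(1-2\varepsilon)^{\Delta-1}(1+\rho)^{r}}{2-(1+\rho)^{r}}.$$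
   Context: Distances in $F_H$ are shortest-path distances in the forest $F_H$. *)

From HB Require Import structures.
From mathcomp Require Import all_boot all_order all_algebra.
Set Implicit Arguments. Unset Strict Implicit. Unset Printing Implicit Defensive.
Import Order.TTheory GRing.Theory Num.Theory.

(* A multigraph on vertex type V with edge (index) type E and endpoint map
   ends : E -> V * V (loops and parallel edges allowed). *)

Fixpoint is_walk (V : eqType) (E : Type) (ends : E -> V * V) (S : E -> Prop)
    (u v : V) (s : seq E) : Prop :=
  match s with
  | [::] => u = v
  | f :: s' => S f /\ exists w, (ends f = (u, w) \/ ends f = (w, u)) /\
                                is_walk ends S w v s'
  end.

(* An edge set is acyclic: it contains no closed trail (a nonempty closed walk
   with pairwise distinct edges), equivalently no cycle. *)
Definition acyclic (V : eqType) (E : finType) (ends : E -> V * V)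
    (F : {set E}) : Prop :=
  forall (u : V) (s : seq E), s != [::] -> uniq s ->
    ~ is_walk ends (fun f => f \in F) u u s.

Definition spanning_forest (V : eqType) (E : finType) (ends : E -> V * V)
    (F : {set E}) : Prop :=
  acyclic ends F /\ forall f : E, f \notin F -> ~ acyclic ends (f |: F).

(* The shortest-path distance in F between u and v is at least D
   (in particular this holds when u and v lie in different trees). *)
Definition dist_ge (V : eqType) (E : finType) (ends : E -> V * V)
    (F : {set E}) (u v : V) (D : nat) : Prop :=
  forall s : seq E, is_walk ends (fun f => f \in F) u v s -> D <= size s.

(* Edge set E_H ∪ {e}: None stands for the new edge e = (a,b). *)
Definition ext_ends (V : Type) (E : Type) (ends : E -> V * V) (a b : V)
    (f : option E) : V * V :=
  match f with Some g => ends g | None => (a, b) end.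

Definition endpoint (V : Type) (p : V * V) (i : bool) : V :=
  if i then p.2 else p.1.

Definition Yval (V : finType) (E : finType) (ends : E -> V * V) (a b : V)
    (x : {ffun V -> bool}) (z : {ffun option E -> bool}) (f : option E) : bool :=
  let p := ext_ends ends a b f in (x p.1 (+) x p.2) (+) z f.

Local Open Scope ring_scope.

Definition weight (R : realFieldType) (V E : finType) (eps : R)
    (x : {ffun V -> bool}) (z : {ffun option E -> bool}) : R :=
  (2%:R ^+ #|V|)^-1 * \prod_(f : option E) (if z f then eps else 1 - eps).

Definition Prob (R : realFieldType) (V E : finType) (eps : R)
    (P : {ffun V -> bool} -> {ffun option E -> bool} -> bool) : R :=
  \sum_(x : {ffun V -> bool}) \sum_(z : {ffun option E -> bool})
     (if P x z then weight eps x z else 0).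

Definition PrYH (R : realFieldType) (V E : finType) (ends : E -> V * V) (a b : V)
    (eps : R) (y : {ffun E -> bool}) : R :=
  Prob eps (fun x z => [forall f : E, Yval ends a b x z (Some f) == y f]).

Definition PrYe0_YH (R : realFieldType) (V E : finType) (ends : E -> V * V)
    (a b : V) (eps : R) (y : {ffun E -> bool}) : R :=
  Prob eps (fun x z => (Yval ends a b x z None == false) &&
                       [forall f : E, Yval ends a b x z (Some f) == y f]).

From HB Require Import structures.
From mathcomp Require Import all_boot all_order all_algebra.
Import Order.TTheory GRing.Theory Num.Theory.
From mathcomp Require Import zify ring lra.
Set Implicit Arguments. Unset Strict Implicit. Unset Printing Implicit Defensive.

(* Put d = 1 - 2 eps and sg_f(x) = (-1)^(x(u) + x(v) + y(f)) for f = (u,v).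
   Summing out the noise, Pr[Y_H = y] is proportional to
   Den = sum_x prod_f (1 + d sg_f(x)), and Pr[Y(e) = 0, Y_H = y] - Pr[Y_H = y]/2
   to d/2 Num, where Num weights the same sum by sg_e(x).  Expanding the
   products, sum_x prod_(f in S) sg_f(x) vanishes unless every vertex has even
   degree in S (resp. in S + e): flipping x at an odd vertex changes its sign.
   An even edge set is determined by its t edges outside the forest F, and it
   has at least Delta t edges (Delta (t + 1) - 1 with e): in S :&: F the odd
   vertices are exactly the 2t (resp. 2t + 2) endpoints of the non-forest
   edges, a trail in S :&: F leads from each of them to another one at
   F-distance >= Delta, and the first Delta/2 edges of these trails are
   pairwise disjoint.  Hence, in units of 2^|V|, the nonempty even sets
   change Den by at most sum_(T nonempty) rho^|T| = (1 + rho)^r - 1, and those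
   containing e contribute at most d^(Delta-1) (1 + rho)^r to |Num|. *)

Section Walks.
Variables (V : eqType) (E : Type) (ends : E -> V * V).

Definition joins (f : E) (p q : V) := ends f = (p, q) \/ ends f = (q, p).

Lemma joins_endpoint f p q p' q' : joins f p q -> joins f p' q' ->
  p' = p \/ p' = q.
Proof. by rewrite /joins; case=> ->; case=> [[-> _]|[_ ->]]; auto. Qed.

Lemma walk_cat (P : E -> Prop) u v s1 s2 :
  is_walk ends P u v (s1 ++ s2) <->
  exists w, is_walk ends P u w s1 /\ is_walk ends P w v s2.
Proof.
elim: s1 u => [|f s1 IH] u /=.
  by split; [move=> h; exists u | case=> w [-> h]].
split.
  case=> Pf [w [hw]] /IH [w' [h1 h2]].
  by exists w'; split=> //; split=> //; exists w.
case=> w' [[Pf [w [hw h1]]] h2]; split=> //; exists w; split=> //.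
by apply/IH; exists w'.
Qed.

Lemma walk_rcons (P : E -> Prop) u v w s f :
  is_walk ends P u v s -> P f -> joins f v w -> is_walk ends P u w (rcons s f).
Proof.
move=> hs Pf hj; rewrite -cats1; apply/walk_cat; exists v; split=> //=.
split=> //; exists w; split=> //.
Qed.

Lemma walk_rev (P : E -> Prop) u v s :
  is_walk ends P u v s -> is_walk ends P v u (rev s).
Proof.
elim: s u => [|f s IH] u /=; first by move=> ->.
case=> Pf [w [hw hs]]; rewrite rev_cons.
apply: walk_rcons (IH _ hs) Pf _.
by rewrite /joins; case: hw; [right|left].
Qed.

Lemma walk_mono (P Q : E -> Prop) u v s :
  (forall f, P f -> Q f) -> is_walk ends P u v s -> is_walk ends Q u v s.
Proof.
move=> PQ; elim: s u => [|f s IH] u //= [Pf [w [hw hs]]].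
by split; [apply: PQ | exists w; split=> //; apply: IH].
Qed.

End Walks.

Section WalkEdges.
Variables (V : eqType) (E : eqType) (ends : E -> V * V) (P : E -> Prop).

Lemma walk_mem u v s f : is_walk ends P u v s -> f \in s -> P f.
Proof.
elim: s u => [|g s IH] u //= [Pg [w [_ hs]]].
by rewrite inE => /orP [/eqP -> //| fs]; apply: IH hs fs.
Qed.

Lemma walk_take_edge u v s k f :
  is_walk ends P u v s -> f \in take k s ->
  exists s' p q, [/\ is_walk ends P u p s', size s' < k & joins ends f p q].
Proof.
elim: s u k => [|g s IH] u k //=; case: k => [|k] //= [Pg [w [hw hs]]].
rewrite inE => /orP [/eqP ->|fs].
  by exists [::], u, w; split.
have [s' [p [q [h1 h2 h3]]]] := IH _ _ hs fs.
exists (g :: s'), p, q; split=> //=; split=> //; exists w; split=> //.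
Qed.

End WalkEdges.

Section Degree.
Variables (V : eqType) (E : Type) (ends : E -> V * V).

(* Loops count twice, as in the handshake lemma. *)
Definition incid (f : E) (v : V) : nat :=
  ((ends f).1 == v) + ((ends f).2 == v).

Definition deg_seq (s : seq E) (v : V) : nat := \sum_(f <- s) incid f v.

Lemma incid_joins f p q x : joins ends f p q -> incid f x = (p == x) + (q == x).
Proof. by rewrite /incid; case=> ->; rewrite //= addnC. Qed.

Lemma incid_gt0_joins f v : 0 < incid f v -> exists q, joins ends f v q.
Proof.
rewrite /incid /joins; case: (ends f) => p1 p2 /=.
case: (eqVneq p1 v) => [->|_]; first by exists p2; left.
case: (eqVneq p2 v) => [->|//]; by exists p1; right.
Qed.

Lemma walk_deg_seq_even (P : E -> Prop) u v s x :
  is_walk ends P u v s -> ~~ odd (deg_seq s x + (u == x) + (v == x)).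
Proof.
elim: s u => [|f s IH] u /=.
  by move=> ->; rewrite /deg_seq big_nil add0n addnn odd_double.
case=> _ [w [hw hs]]; have := IH _ hs.
rewrite /deg_seq big_cons (incid_joins x hw).
set A := \sum_(j <- s) incid j x => h.
have -> : (u == x) + (w == x) + A + (u == x) + (v == x)
          = (u == x).*2 + (A + (w == x) + (v == x)) by rewrite -addnn; lia.
by rewrite oddD odd_double.
Qed.

End Degree.

Section EvenSets.
Variables (V : eqType) (E : finType) (ends : E -> V * V) (F : {set E}).
Hypothesis F_acyclic : acyclic ends F.

Definition deg (D : {set E}) (v : V) : nat := \sum_(f in D) incid ends f v.

Definition even_with (S : {set E}) (c : V -> nat) :=
  forall v, ~~ odd (deg S v + c v).

Lemma deg_setID (S B : {set E}) v : deg S v = deg (S :&: B) v + deg (S :\: B) v.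
Proof. by rewrite /deg (big_setID B). Qed.

Lemma incid_le_deg f (D : {set E}) v : f \in D -> incid ends f v <= deg D v.
Proof. by move=> fD; rewrite /deg (bigD1 f) //= leq_addr. Qed.

(* Extend a trail greedily; it cannot return to w since D is acyclic, and it
   stops at a vertex all of whose D-edges it has used, which is then odd. *)
Lemma acyclic_trail_to_odd (D : {set E}) w : D \subset F -> 0 < deg D w ->
  exists s v, [/\ uniq s, is_walk ends (fun f => f \in D) w v s, v != w
                & odd (deg D v)].
Proof.
move=> DF hw; set P := fun f => f \in D.
have cyc s : s != [::] -> uniq s -> ~ is_walk ends P w w s.
  by move=> ne us /(walk_mono (Q := fun f => f \in F)) h;
     apply: (F_acyclic ne us); apply: h => f; apply: (subsetP DF).
suff H : forall k s v, #|E| - size s < k -> uniq s -> is_walk ends P w v s ->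
    exists s v, [/\ uniq s, is_walk ends P w v s, v != w & odd (deg D v)].
  by apply: (H #|E|.+1 [::] w); rewrite ?subn0.
elim=> [|k IH] s v // hk us hs.
case: (pickP [pred f | (f \in D) && (f \notin s) && (0 < incid ends f v)]).
  move=> f /= /andP [/andP [fD fs] hi]; have [q hq] := incid_gt0_joins hi.
  have us' : uniq (rcons s f) by rewrite rcons_uniq fs us.
  have hsz : size (rcons s f) <= #|E|.
    by rewrite -(card_uniqP us'); apply: max_card.
  apply: (IH (rcons s f) q) => //; last exact: walk_rcons hs fD hq.
  by move: hsz hk; rewrite size_rcons; lia.
move=> used; have hdeg : deg D v = deg_seq ends s v.
  rewrite /deg (bigID (fun f => f \in s)) /= [X in _ + X]big1 ?addn0; last first.
    move=> f /andP [fD fs]; have := used f; rewrite /= fD fs /=.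
    by rewrite lt0n => /negbFE/eqP.
  rewrite /deg_seq big_uniq //; apply: eq_bigl => f.
  by case fs: (f \in s); rewrite ?andbF ?andbT //; exact: (walk_mem hs fs).
clear used; case: s hk us hs hdeg => [|f0 s0] _ us hs hdeg.
  by move: hs hw => /= ->; rewrite hdeg /deg_seq big_nil.
have vw : v != w by apply/eqP => vw; subst v; exact: cyc hs.
exists (f0 :: s0), v; split=> //.
have wv : (w == v) = false by rewrite eq_sym; exact: negbTE.
by have := walk_deg_seq_even v hs; rewrite hdeg eqxx wv addn0 addn1 /= => /negbNE.
Qed.

Lemma acyclic_even_eq0 (D : {set E}) :
  D \subset F -> (forall v, ~~ odd (deg D v)) -> D = set0.
Proof.
move=> DF he; case: (set_0Vmem D) => [//|[f fD]].
have hw : 0 < deg D (ends f).1.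
  by apply: leq_trans (incid_le_deg _ fD); rewrite /incid eqxx.
have [s [v [_ _ _ hodd]]] := acyclic_trail_to_odd DF hw.
by move: (he v); rewrite hodd.
Qed.

(* The symmetric difference of two such sets is even and lies in F. *)
Lemma even_with_inj (S1 S2 : {set E}) c : even_with S1 c -> even_with S2 c ->
  S1 :&: ~: F = S2 :&: ~: F -> S1 = S2.
Proof.
move=> h1 h2 hN; pose D := (S1 :\: S2) :|: (S2 :\: S1).
have DF : D \subset F.
  apply/subsetP => f; rewrite !inE => /orP [] /andP [hn hs];
    apply/negPn/negP => fF.
    have : f \in S1 :&: ~: F by rewrite !inE hs fF.
    by rewrite hN !inE (negbTE hn).
  have : f \in S2 :&: ~: F by rewrite !inE hs fF.
  by rewrite -hN !inE (negbTE hn).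
have hD v : ~~ odd (deg D v).
  rewrite (deg_setID D S1).
  have -> : D :&: S1 = S1 :\: S2.
    by apply/setP => f; rewrite !inE; case: (f \in S1); case: (f \in S2).
  have -> : D :\: S1 = S2 :\: S1.
    by apply/setP => f; rewrite !inE; case: (f \in S1); case: (f \in S2).
  move: (h1 v) (h2 v); rewrite (deg_setID S1 S2) (deg_setID S2 S1) setIC !oddD.
  by case: (odd (deg (S1 :\: S2) v)); case: (odd (deg (S2 :\: S1) v));
     case: (odd (deg (S2 :&: S1) v)); case: (odd (c v)).
have D0 := acyclic_even_eq0 DF hD.
apply/eqP; rewrite eqEsubset -!setD_eq0; apply/andP; split; apply/eqP;
  apply/setP => f; move/setP: D0 => /(_ f); rewrite !inE;
  by case: (f \in S1); case: (f \in S2).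
Qed.

End EvenSets.

Section Terminals.
Variables (V : eqType) (E : finType) (ends : E -> V * V) (F : {set E}).
Variable Delta : nat.
Hypothesis F_acyclic : acyclic ends F.
Variables (I : finType) (term : I -> V) (A : {set I}) (D : {set E}).
Hypothesis D_sub_F : D \subset F.
Hypothesis term_odd : forall t, t \in A -> odd (deg ends D (term t)).
Hypothesis odd_term : forall w, odd (deg ends D w) -> exists2 t, t \in A & term t = w.
Hypothesis term_far : forall t1 t2, t1 \in A -> t2 \in A -> t1 != t2 ->
  dist_ge ends F (term t1) (term t2) Delta.

Let walkD := is_walk ends (fun g => g \in D).

Definition near_term t f := exists s p q,
  [/\ walkD (term t) p s, size s < Delta./2 & joins ends f p q].

(* Otherwise the two walks through f would join t1 and t2 by fewer than Delta
   edges of F. *)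
Lemma near_term_unique t1 t2 f : t1 \in A -> t2 \in A -> f \in D ->
  near_term t1 f -> near_term t2 f -> t1 = t2.
Proof.
move=> h1 h2 fD [s1 [p1 [q1 [w1 z1 j1]]]] [s2 [p2 [q2 [w2 z2 j2]]]].
apply/eqP/negPn/negP => ne.
have hd := term_far h1 h2 ne.
have walkF u v s : walkD u v s -> is_walk ends (fun f => f \in F) u v s.
  by apply: walk_mono => g gD; apply: (subsetP D_sub_F).
have hk : (Delta./2).*2 <= Delta by have := odd_double_half Delta; lia.
move/walk_rev: w2 => w2.
case: (joins_endpoint j1 j2) => e; subst p2.
  have w : walkD (term t1) (term t2) (s1 ++ rev s2) by apply/walk_cat; exists p1.
  by have := hd _ (walkF _ _ _ w); rewrite size_cat size_rev; move: hk; lia.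
have w : walkD (term t1) (term t2) (s1 ++ f :: rev s2).
  by apply/walk_cat; exists p1; split=> //=; split=> //; exists q1.
by have := hd _ (walkF _ _ _ w); rewrite size_cat /= size_rev; move: hk; lia.
Qed.

Lemma near_term_ball t : t \in A ->
  exists P : {set E}, [/\ P \subset D, #|P| = Delta./2 &
                forall f, f \in P -> near_term t f].
Proof.
move=> tA; have hw : 0 < deg ends D (term t).
  by have := term_odd tA; case: (deg ends D (term t)).
have [s [v [us ws vne vodd]]] := acyclic_trail_to_odd F_acyclic D_sub_F hw.
have [t' t'A vt'] := odd_term vodd.
have hsz : Delta <= size s.
  apply: (term_far tA t'A); first by apply/eqP => e; move: vne; rewrite -vt' e eqxx.
  by rewrite vt'; apply: walk_mono ws => f fD; exact: (subsetP D_sub_F).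
exists [set f in take Delta./2 s]; split.
- by apply/subsetP => f; rewrite inE => /mem_take; exact: walk_mem ws.
- rewrite cardsE (card_uniqP (take_uniq _ us)) size_take.
  case: ifP => // /negbT; rewrite -leqNgt => h; apply/eqP; rewrite eqn_leq h /=.
  by apply: leq_trans hsz; rewrite leq_half_double -addnn; lia.
- move=> f; rewrite inE => hf.
  have [s' [p [q [h1 h2 h3]]]] := walk_take_edge ws hf.
  by exists s', p, q.
Qed.

Lemma near_terms_card (l : seq I) : uniq l -> {subset l <= A} ->
  exists E0 : {set E}, [/\ E0 \subset D, #|E0| = Delta./2 * size l &
     forall f, f \in E0 -> exists2 t, t \in l & near_term t f].
Proof.
elim: l => [|t l IH] /=.
  by move=> _ _; exists set0; split; rewrite ?sub0set ?cards0 ?muln0 // => f; rewrite inE.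
move=> /andP [tl ul] sub.
have [E0 [E0D cE0 nE0]] := IH ul (fun x xl => sub x (mem_behead (s := t :: l) xl)).
have tA : t \in A by apply: sub; rewrite mem_head.
have [P [PD cP Pn]] := near_term_ball tA.
have disj : E0 :&: P = set0.
  apply/setP => f; rewrite !inE; apply/negP => /andP [fE fP].
  have [t0 t0l n0] := nE0 _ fE.
  have t0t : t0 = t.
    by apply: (near_term_unique _ tA (subsetP PD _ fP) n0 (Pn _ fP));
       apply: sub; rewrite inE t0l orbT.
  by move: tl; rewrite -t0t t0l.
exists (E0 :|: P); split.
- by rewrite subUset E0D PD.
- by rewrite cardsU disj cards0 subn0 cE0 cP mulnS addnC.
- move=> f; rewrite inE => /orP [/nE0 [t0 t0l n0]|fP].
    by exists t0; rewrite // inE t0l orbT.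
  by exists t; [rewrite mem_head | exact: Pn].
Qed.

Lemma terminals_card : Delta./2 * #|A| <= #|D|.
Proof.
have sub : {subset enum A <= A} by move=> x; rewrite mem_enum.
have [E0 [E0D cE0 _]] := near_terms_card (enum_uniq A) sub.
by rewrite cardE -cE0; apply: subset_leq_card.
Qed.

End Terminals.

Lemma big_option (R : Type) (idx : R) (op : Monoid.com_law idx) (T : finType)
    (G : option T -> R) :
  \big[op/idx]_(g : option T) G g = op (G None) (\big[op/idx]_(f : T) G (Some f)).
Proof.
rewrite (bigD1 None) //=; congr (op _ _).
rewrite (reindex_omap (@Some T) (fun g => g)) => [|[]//].
by apply: eq_bigl => f; rewrite eqxx.
Qed.

Definition deg_e (V : eqType) (a b : V) (with_e : bool) (v : V) : nat :=
  if with_e then (a == v) + (b == v) else 0.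

Section NonForestEdges.
Variables (V : eqType) (EH : finType) (ends : EH -> V * V) (F : {set EH}).
Variables (a b : V) (Delta : nat).
Hypothesis F_acyclic : acyclic ends F.
Hypothesis ends_inj : forall (f g : option EH) (i j : bool),
      (if f is Some f' then f' \notin F else true) ->
      (if g is Some g' then g' \notin F else true) ->
      endpoint (ext_ends ends a b f) i = endpoint (ext_ends ends a b g) j ->
      f = g /\ i = j.
Hypothesis ends_far : forall (f g : option EH) (i j : bool),
      (if f is Some f' then f' \notin F else true) ->
      (if g is Some g' then g' \notin F else true) ->
      (f, i) <> (g, j) ->
      dist_ge ends F (endpoint (ext_ends ends a b f) i)
                     (endpoint (ext_ends ends a b g) j) Delta.

Variables (S : {set EH}) (with_e : bool).
Hypothesis S_even : even_with ends S (deg_e a b with_e).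

Let ext := ext_ends ends a b.
Let D := S :&: F.
Let T := S :&: ~: F.
Let outer : {set option EH} := [set g | if g is Some f then f \in T else with_e].
Let terms : {set option EH * bool} := setX outer setT.
Let term (t : option EH * bool) := endpoint (ext t.1) t.2.

Lemma outer_notin_F g : g \in outer -> if g is Some f then f \notin F else true.
Proof. by rewrite inE; case: g => // f; rewrite !inE => /andP []. Qed.

Lemma terms_notin_F t : t \in terms -> if t.1 is Some f then f \notin F else true.
Proof. by case: t => g i; rewrite in_setX => /andP [/outer_notin_F]. Qed.

Lemma card_terms : #|terms| = (#|T| + with_e) * 2.
Proof.
rewrite cardsX cardsT card_bool (cardsD1 None) inE addnC.
have -> : outer :\ None = Some @: T.
  apply/setP => -[f|]; rewrite !inE /=.
    by rewrite (mem_imset _ _ (@Some_inj _)) /T !inE.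
  by apply/esym/imsetP => -[].
by rewrite card_imset //; exact: Some_inj.
Qed.

Lemma term_inj : {in terms &, injective term}.
Proof.
move=> t1 t2 /terms_notin_F h1 /terms_notin_F h2 /(ends_inj h1 h2) [].
by case: t1 {h1} => ? ?; case: t2 {h2} => ? ? /= -> ->.
Qed.

(* Every endpoint of a non-forest edge of S, or of e, is one terminal. *)
Lemma deg_terms v :
  deg ends S v + deg_e a b with_e v = deg ends D v + \sum_(t in terms) (term t == v).
Proof.
rewrite (deg_setID ends S F) -/D -addnA; congr (_ + _).
have -> : \sum_(t in terms) (term t == v) = \sum_(g in outer) incid ext g v.
  rewrite (eq_bigl (fun t => (t.1 \in outer) && (t.2 \in [set: bool]))); last first.
    by case=> ? ?; rewrite in_setX.
  rewrite -(pair_big (fun g => g \in outer) (fun i => i \in [set: bool])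
                     (fun g i => (endpoint (ext g) i == v) : nat)) /=.
  apply: eq_bigr => g _; rewrite (eq_bigl xpredT); last by move=> i; rewrite inE.
  by rewrite big_bool /incid /= addnC.
rewrite big_mkcond big_option /= inE -big_mkcond /= setDE -/T /deg.
rewrite [X in _ = _ + X](eq_bigl (fun f => f \in T)) => [|f]; last by rewrite inE.
by rewrite addnC /deg_e /incid; case: with_e.
Qed.

Lemma term_odd t : t \in terms -> odd (deg ends D (term t)).
Proof.
move=> tT; have := S_even (term t); rewrite deg_terms (bigD1 t) //= eqxx.
rewrite big1 ?addn0 ?addn1 /=; first by move/negbNE.
move=> t' /andP [t'T ne]; apply/eqP; rewrite eqb0; apply/eqP => h.
by move/eqP: ne; apply; apply: term_inj.
Qed.

Lemma odd_term w : odd (deg ends D w) -> exists2 t, t \in terms & term t = w.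
Proof.
move=> ho; case: (pickP [pred t | (t \in terms) && (term t == w)]).
  by move=> t /andP [h /eqP e]; exists t.
move=> none; have := S_even w; rewrite deg_terms big1 ?addn0 ?ho //.
by move=> t tT; have := none t; rewrite /= tT /= => ->.
Qed.

Lemma even_set_card : Delta * (#|S :&: ~: F| + with_e) <= #|S| + with_e.
Proof.
have := terminals_card F_acyclic (subsetIr S F) term_odd odd_term
  (fun t1 t2 h1 h2 ne => ends_far (terms_notin_F h1) (terms_notin_F h2)
     (fun e => negP ne (introT eqP (etrans (surjective_pairing t1)
                                    (etrans e (esym (surjective_pairing t2))))))).
rewrite card_terms -(cardsID F S) -/D setDE -/T.
by have := odd_double_half Delta; rewrite -addnn; case: (odd Delta) => /=; nia.
Qed.

End NonForestEdges.

Local Open Scope ring_scope.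

Lemma ler_sum_widen (R : numDomainType) (I : finType) (P P' : pred I) (F : I -> R) :
  (forall i, P i -> P' i) -> (forall i, P' i -> 0 <= F i) ->
  \sum_(i | P i) F i <= \sum_(i | P' i) F i.
Proof.
move=> PP F0; rewrite [X in _ <= X](bigID P) /=.
rewrite (eq_bigl P); last by move=> i; case: (boolP (P i)) => h; rewrite ?andbT ?andbF ?PP.
by rewrite lerDl; apply: sumr_ge0 => i /andP [h _]; exact: F0.
Qed.

Lemma prod1D_subsets (R : comNzRingType) (I : finType) (A : {set I}) (g : I -> R) :
  \prod_(i in A) (1 + g i) = \sum_(S : {set I} | S \subset A) \prod_(i in S) g i.
Proof.
pose h i (c : bool) := if c then (if i \in A then g i else 0) else 1.
have -> : \prod_(i in A) (1 + g i) = \prod_(i : I) \sum_(c : bool) h i c.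
  rewrite [RHS](bigID (fun i => i \in A)) /= [X in _ * X]big1 ?mulr1.
    by apply: eq_bigr => i iA; rewrite big_bool /h iA /= addrC.
  by move=> i /negbTE iA; rewrite big_bool /h iA /= add0r.
rewrite bigA_distr_bigA /=.
rewrite (reindex (fun S : {set I} => [ffun i => i \in S])); last first.
  exists (fun f : {ffun I -> bool} => [set i | f i]) => [S _|f _].
    by apply/setP => i; rewrite inE ffunE.
  by apply/ffunP => i; rewrite ffunE inE.
rewrite [RHS]big_mkcond /=; apply: eq_bigr => S _.
under eq_bigr do rewrite ffunE.
rewrite -big_mkcond /=.
case: (boolP (S \subset A)) => sA.
  by apply: eq_bigr => i iS; rewrite /h (subsetP sA i iS).
case/subsetPn: sA => i iS niA.
by rewrite (bigD1 i) //= /h (negbTE niA) mul0r.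
Qed.

Lemma prod_if_forall (R : comNzRingType) (I : finType) (P : pred I) (F : I -> R) :
  (if [forall i, P i] then \prod_i F i else 0) = \prod_i (if P i then F i else 0).
Proof.
case: (boolP [forall i, P i]) => [/forallP h|/forallPn [i hi]].
  by apply: eq_bigr => i _; rewrite h.
by rewrite (bigD1 i) //= (negbTE hi) mul0r.
Qed.

(* The deviation is exactly d |Num| / (2 Den). *)
Lemma ratio_deviation_bound (R : realFieldType) (c n Den Num d X P : R) :
  0 < c -> 0 < n -> 0 < d -> d <= 1 -> P < 2%:R ->
  n * (2%:R - P) <= Den -> `|Num| <= n * X ->
  `| c / 2%:R * (Den + d * Num) / (c * Den) - 1 / 2%:R | <= X / (2%:R - P).
Proof.
move=> c0 n0 d0 d1 P2 hDen hNum.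
have P0 : 0 < 2%:R - P by lra.
have Den0 : 0 < Den by apply: lt_le_trans hDen; exact: mulr_gt0.
have -> : c / 2%:R * (Den + d * Num) / (c * Den) - 1 / 2%:R = Num * (d / (2%:R * Den)).
  by field; rewrite ?(gt_eqF c0) ?(gt_eqF Den0).
have k0 : 0 < d / (2%:R * Den) by rewrite divr_gt0 // mulr_gt0.
have X0 : 0 <= X by rewrite -(pmulr_rge0 _ n0); exact: le_trans hNum.
have hk : n * (2%:R - P) * (d / (2%:R * Den)) <= 1.
  rewrite mulrA ler_pdivrMr ?mulr_gt0 // mul1r.
  by have := ler_wpM2r (ltW d0) hDen; nra.
rewrite normrM (gtr0_norm k0) ler_pdivlMr //.
apply: le_trans (_ : n * X * (d / (2%:R * Den)) * (2%:R - P) <= _).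
  by rewrite ler_wpM2r ?(ltW P0) // ler_wpM2r ?(ltW k0).
have -> : n * X * (d / (2%:R * Den)) * (2%:R - P)
          = X * (n * (2%:R - P) * (d / (2%:R * Den))) by ring.
by rewrite -[leRHS]mulr1 ler_wpM2l.
Qed.

Section Fourier.
Variables (R : realFieldType) (V EH : finType) (ends : EH -> V * V) (a b : V).
Variable y : {ffun EH -> bool}.

Let ext := ext_ends ends a b.

Definition sgn (c : bool) : R := (-1) ^+ c.
Definition xsum (x : {ffun V -> bool}) (g : option EH) : bool :=
  x (ext g).1 (+) x (ext g).2.
Definition edge_sgn x f := sgn (xsum x (Some f) (+) y f).
Definition e_sgn x := sgn (xsum x None).
Definition char_prod (S : {set EH}) (with_e : bool) x :=
  (if with_e then e_sgn x else 1) * \prod_(f in S) edge_sgn x f.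
Definition char_sum (S : {set EH}) (with_e : bool) :=
  \sum_(x : {ffun V -> bool}) char_prod S with_e x.

Lemma char_sum_norm S with_e : `|char_sum S with_e| <= 2%:R ^+ #|V|.
Proof.
have sgn_norm c : `|sgn c| = 1 by rewrite normrX normrN1 expr1n.
apply: le_trans (ler_norm_sum _ _ _) _.
rewrite (eq_bigr (fun _ => 1)); last first.
  move=> x _; rewrite normrM normr_prod big1 ?mulr1 => [|f _]; last exact: sgn_norm.
  by case: with_e; rewrite ?sgn_norm ?normr1.
by rewrite sumr_const card_ffun card_bool natrX.
Qed.

Lemma char_sum0 : char_sum set0 false = 2%:R ^+ #|V|.
Proof.
rewrite /char_sum (eq_bigr (fun _ => 1)) => [|x _]; last by rewrite /char_prod big_set0 mulr1.
by rewrite sumr_const card_ffun card_bool natrX.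
Qed.

Definition flip (v : V) (x : {ffun V -> bool}) : {ffun V -> bool} :=
  [ffun u => x u (+) (u == v)].

Lemma flipK v : involutive (flip v).
Proof. by move=> x; apply/ffunP => u; rewrite !ffunE addbK. Qed.

Lemma sgn_flip v x g c :
  sgn (xsum (flip v x) g (+) c) = sgn (xsum x g (+) c) * (-1) ^+ (incid ext g v).
Proof.
rewrite /xsum /incid /sgn !ffunE !signr_addb exprD.
set p := (-1) ^+ ((ext g).1 == v); set q := (-1) ^+ ((ext g).2 == v).
ring.
Qed.

Lemma char_prod_flip S with_e v x :
  char_prod S with_e (flip v x)
  = (-1) ^+ (deg ends S v + deg_e a b with_e v) * char_prod S with_e x.
Proof.
rewrite /char_prod exprD.
have -> : \prod_(f in S) edge_sgn (flip v x) f
          = \prod_(f in S) edge_sgn x f * (-1) ^+ deg ends S v.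
  by rewrite /deg -prodrXr -big_split /=; apply: eq_bigr => f _; exact: sgn_flip.
case: with_e; rewrite /deg_e /=; last by rewrite expr0; ring.
have -> : e_sgn (flip v x) = e_sgn x * (-1) ^+ ((a == v) + (b == v)).
  by have := sgn_flip v x None false; rewrite /e_sgn !addbF.
ring.
Qed.

Definition evenb (S : {set EH}) (with_e : bool) :=
  [forall v, ~~ odd (deg ends S v + deg_e a b with_e v)].

Lemma evenbP S with_e : evenb S with_e -> even_with ends S (deg_e a b with_e).
Proof. by move/forallP. Qed.

Lemma char_sum_odd S with_e : ~~ evenb S with_e -> char_sum S with_e = 0.
Proof.
case/forallPn => v /negbNE ho.
have h : char_sum S with_e = - char_sum S with_e.
  rewrite {1}/char_sum (reindex_inj (can_inj (flipK v))) /=.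
  under eq_bigr do rewrite char_prod_flip -signr_odd ho expr1 mulN1r.
  by rewrite sumrN.
lra.
Qed.

Section Expansion.
Variable d : R.

Definition likelihood x := \prod_(f : EH) (1 + d * edge_sgn x f).

Lemma likelihood_expand x :
  likelihood x = \sum_(S : {set EH}) d ^+ #|S| * \prod_(f in S) edge_sgn x f.
Proof.
rewrite /likelihood (eq_bigl (fun f => f \in [set: EH])) => [|f]; last by rewrite inE.
rewrite prod1D_subsets; apply: eq_big => [S|S _]; first by rewrite subsetT.
by rewrite prodrMl.
Qed.

Lemma sum_likelihood : \sum_x likelihood x = \sum_(S : {set EH}) d ^+ #|S| * char_sum S false.
Proof.
under eq_bigr do rewrite likelihood_expand.
rewrite exchange_big /=; apply: eq_bigr => S _.
by rewrite /char_sum mulr_sumr; apply: eq_bigr => x _; rewrite /char_prod mul1r.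
Qed.

Lemma sum_e_sgn_likelihood :
  \sum_x e_sgn x * likelihood x = \sum_(S : {set EH}) d ^+ #|S| * char_sum S true.
Proof.
under eq_bigr do rewrite likelihood_expand mulr_sumr.
rewrite exchange_big /=; apply: eq_bigr => S _.
by rewrite /char_sum mulr_sumr; apply: eq_bigr => x _; rewrite /char_prod; ring.
Qed.

End Expansion.

Section Probabilities.
Variable eps : R.
Let d := 1 - 2%:R * eps.
Let c : R := (2%:R ^+ #|V|)^-1 * (2%:R^-1) ^+ #|EH|.

Definition bern (c : bool) : R := if c then eps else 1 - eps.

Lemma sum_noise (x : {ffun V -> bool}) (C : option EH -> bool -> bool) :
  \sum_(z : {ffun option EH -> bool})
     (if [forall g, C g (z g)] then weight eps x z else 0)
  = (2%:R ^+ #|V|)^-1 * \prod_(g : option EH) \sum_(c : bool) (if C g c then bern c else 0).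
Proof.
rewrite bigA_distr_bigA mulr_sumr; apply: eq_bigr => z _.
by rewrite /weight -prod_if_forall; case: ifP => _; rewrite ?mulr0.
Qed.

Lemma sum_bern_edges x :
  \prod_(f : EH) \sum_(c : bool) (if xsum x (Some f) (+) c == y f then bern c else 0)
  = (2%:R^-1) ^+ #|EH| * likelihood d x.
Proof.
rewrite /likelihood -prodr_const -big_split /=; apply: eq_bigr => f _.
rewrite big_bool /bern /d /edge_sgn /sgn.
by case: (xsum x (Some f)); case: (y f); rewrite /= ?expr0 ?expr1; field.
Qed.

Lemma PrYH_likelihood : PrYH ends a b eps y = c * \sum_x likelihood d x.
Proof.
rewrite /PrYH /Prob mulr_sumr; apply: eq_bigr => x _.
pose C g c := if g is Some f then xsum x g (+) c == y f else true.
rewrite (eq_bigr (fun z : {ffun option EH -> bool} =>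
                    if [forall g, C g (z g)] then weight eps x z else 0)).
  rewrite sum_noise big_option /= big_bool /bern sum_bern_edges /c.
  by rewrite /= addrC subrK mul1r mulrA.
move=> z _; congr (if _ then _ else _).
by apply/forallP/forallP => [h [f|] //|h f]; [exact: (h f)|exact: (h (Some f))].
Qed.

Lemma PrYe0_YH_likelihood : PrYe0_YH ends a b eps y
  = c / 2%:R * (\sum_x likelihood d x + d * \sum_x e_sgn x * likelihood d x).
Proof.
rewrite /PrYe0_YH /Prob [d * _]mulr_sumr -big_split /= mulr_sumr.
apply: eq_bigr => x _.
pose C g c := if g is Some f then xsum x g (+) c == y f else xsum x None (+) c == false.
rewrite (eq_bigr (fun z : {ffun option EH -> bool} =>
                    if [forall g, C g (z g)] then weight eps x z else 0)).
  rewrite sum_noise big_option /= big_bool /bern sum_bern_edges /c /d /e_sgn /sgn.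
  by case: (xsum x None); rewrite /= ?expr0 ?expr1 ?addr0 ?add0r; field;
     rewrite expf_neq0 ?pnatr_eq0.
move=> z _; congr (if _ then _ else _).
apply/andP/forallP => [[h1 /forallP h] [f|] //|h]; first exact: (h f).
by split; [exact: (h None) | apply/forallP => f; exact: (h (Some f))].
Qed.

End Probabilities.

Section Bounds.
Variables (F : {set EH}) (Delta : nat).
Hypothesis F_acyclic : acyclic ends F.
Hypothesis ends_inj : forall (f g : option EH) (i j : bool),
      (if f is Some f' then f' \notin F else true) ->
      (if g is Some g' then g' \notin F else true) ->
      endpoint (ext_ends ends a b f) i = endpoint (ext_ends ends a b g) j ->
      f = g /\ i = j.
Hypothesis ends_far : forall (f g : option EH) (i j : bool),
      (if f is Some f' then f' \notin F else true) ->
      (if g is Some g' then g' \notin F else true) ->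
      (f, i) <> (g, j) ->
      dist_ge ends F (endpoint (ext_ends ends a b f) i)
                     (endpoint (ext_ends ends a b g) j) Delta.
Variable d : R.
Hypotheses (d_ge0 : 0 <= d) (d_le1 : d <= 1).
Let rho := d ^+ Delta.

Lemma even_weight S with_e : evenb S with_e ->
  d ^+ #|S| <= d ^+ (with_e * (Delta - 1))%N * rho ^+ #|S :&: ~: F|.
Proof.
move=> /evenbP S_even; have := even_set_card F_acyclic ends_inj ends_far S_even.
rewrite /rho -exprM -exprD => h; apply: ler_wiXn2l => //.
by move: h; clear S_even; case: with_e => /=; nia.
Qed.

Lemma sum_even_weights with_e (P Q : pred {set EH}) :
  (forall S, P S -> evenb S with_e) -> (forall S, P S -> Q (S :&: ~: F)) ->
  \sum_(S | P S) d ^+ #|S|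
    <= d ^+ (with_e * (Delta - 1))%N * \sum_(T | Q T) rho ^+ #|T|.
Proof.
move=> PE PQ.
apply: le_trans (_ : \sum_(S | P S) d ^+ (with_e * (Delta - 1))%N
                                     * rho ^+ #|S :&: ~: F| <= _).
  by apply: ler_sum => S PS; apply: even_weight; apply: PE.
rewrite -mulr_sumr ler_wpM2l ?exprn_ge0 //.
have inj : {in P &, injective (fun S : {set EH} => S :&: ~: F)}.
  move=> S1 S2 h1 h2 /= e.
  exact (even_with_inj F_acyclic (evenbP (PE _ h1)) (evenbP (PE _ h2)) e).
rewrite (eq_bigl (fun S => S \in P)) // -(big_imset (fun T : {set EH} => rho ^+ #|T|) inj) /=.
apply: ler_sum_widen => [T /imsetP [S PS ->]|T _]; first exact: PQ.
by rewrite !exprn_ge0.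
Qed.

Lemma sum_rho_subsets :
  \sum_(T : {set EH} | T \subset ~: F) rho ^+ #|T| = (1 + rho) ^+ #|~: F|.
Proof.
under eq_bigr do rewrite -prodr_const.
by rewrite -prod1D_subsets prodr_const.
Qed.

(* Besides the empty set, even sets S have |S| >= Delta and are determined by
   their nonempty part outside F. *)
Lemma sum_likelihood_lower :
  2%:R ^+ #|V| * (2%:R - (1 + rho) ^+ #|~: F|) <= \sum_x likelihood d x.
Proof.
set P := (1 + rho) ^+ #|~: F|; set n2 : R := 2%:R ^+ #|V|.
have n2_gt0 : 0 < n2 by rewrite exprn_gt0 // ltr0n.
have even0 : evenb set0 false by apply/forallP => v; rewrite /deg big_set0.
have nonempty_le :
    \sum_(S | (S != set0) && evenb S false) d ^+ #|S| <= P - 1.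
  have <- : \sum_(T : {set EH} | (T \subset ~: F) && (T != set0)) rho ^+ #|T| = P - 1.
    rewrite /P -sum_rho_subsets [in RHS](bigD1 set0) ?sub0set //= cards0 expr0.
    by rewrite addrAC subrr add0r.
  have := sum_even_weights (with_e := false)
    (P := fun S : {set EH} => (S != set0) && evenb S false)
    (Q := fun T : {set EH} => (T \subset ~: F) && (T != set0)).
  rewrite mul0n expr0 mul1r; apply; first by move=> S /andP [].
  move=> S /andP [nz ev]; rewrite subsetIr /=; apply: contra nz => /eqP e.
  by rewrite (even_with_inj F_acyclic (evenbP ev) (evenbP even0)) ?e ?set0I.
have nonempty_ge : - n2 * \sum_(S | (S != set0) && evenb S false) d ^+ #|S|
    <= \sum_(S | S != set0) d ^+ #|S| * char_sum S false.
  rewrite big_mkcondr mulr_sumr; apply: ler_sum => S _.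
  case: (boolP (evenb S false)) => ev; last by rewrite char_sum_odd // !mulr0.
  have := char_sum_norm S false; rewrite -/n2 ler_norml => /andP [h _].
  by have := exprn_ge0 #|S| d_ge0; nra.
rewrite sum_likelihood (bigD1 set0) //= cards0 expr0 mul1r char_sum0 -/n2.
by have := ler_wpM2l (ltW n2_gt0) nonempty_le; lra.
Qed.

Lemma sum_e_sgn_likelihood_upper : `|\sum_x e_sgn x * likelihood d x|
  <= 2%:R ^+ #|V| * (d ^+ (Delta - 1) * (1 + rho) ^+ #|~: F|).
Proof.
rewrite sum_e_sgn_likelihood; apply: le_trans (ler_norm_sum _ _ _) _.
apply: le_trans (_ : \sum_(S : {set EH})
    (if evenb S true then 2%:R ^+ #|V| * d ^+ #|S| else 0) <= _).
  apply: ler_sum => S _; case: (boolP (evenb S true)) => ev; last first.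
    by rewrite char_sum_odd // mulr0 normr0.
  rewrite normrM ger0_norm ?exprn_ge0 // mulrC.
  by rewrite ler_wpM2r ?exprn_ge0 ?char_sum_norm.
rewrite -big_mkcond /= -mulr_sumr ler_wpM2l ?exprn_ge0 ?ler0n //.
have := sum_even_weights (with_e := true) (P := fun S => evenb S true)
                          (Q := fun T : {set EH} => T \subset ~: F).
by rewrite mul1n sum_rho_subsets; apply=> // S _; exact: subsetIr.
Qed.

End Bounds.

End Fourier.

Unset Implicit Arguments. Set Strict Implicit.

Theorem mainTheorem17 (R : realFieldType) (eps : R) (Delta : nat)
    (V EH : finType) (ends : EH -> V * V) (F : {set EH}) (a b : V)
    (y : {ffun EH -> bool}) :
  0 < eps -> eps < 1 / 2%:R -> (1 <= Delta)%N ->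
  spanning_forest ends F ->
  (exists s : seq EH, is_walk ends (fun f => f \in F) a b s) ->
  (forall (f g : option EH) (i j : bool),
      (if f is Some f' then f' \notin F else true) ->
      (if g is Some g' then g' \notin F else true) ->
      endpoint (ext_ends ends a b f) i = endpoint (ext_ends ends a b g) j ->
      f = g /\ i = j) ->
  (forall (f g : option EH) (i j : bool),
      (if f is Some f' then f' \notin F else true) ->
      (if g is Some g' then g' \notin F else true) ->
      (f, i) <> (g, j) ->
      dist_ge ends F (endpoint (ext_ends ends a b f) i)
                     (endpoint (ext_ends ends a b g) j) Delta) ->
  let r := #|~: F| in
  let rho := (1 - 2%:R * eps) ^+ Delta in
  (1 + rho) ^+ r < 2%:R ->
  0 < PrYH ends a b eps y ->
  `| PrYe0_YH ends a b eps y / PrYH ends a b eps y - 1 / 2%:R |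
    <= (1 - 2%:R * eps) ^+ (Delta - 1) * (1 + rho) ^+ r / (2%:R - (1 + rho) ^+ r).
Proof.
move=> eps_gt0 eps_lt_half _ [F_acyclic _] _ ends_inj ends_far r rho rho_small _.
have d_gt0 : 0 < 1 - 2%:R * eps by lra.
have d_le1 : 1 - 2%:R * eps <= 1 by lra.
rewrite PrYH_likelihood PrYe0_YH_likelihood /rho /r.
apply: (ratio_deviation_bound _ _ d_gt0 d_le1 rho_small
  (sum_likelihood_lower y F_acyclic ends_inj ends_far (ltW d_gt0) d_le1)
  (sum_e_sgn_likelihood_upper y F_acyclic ends_inj ends_far (ltW d_gt0) d_le1)).
- by rewrite mulr_gt0 // ?invr_gt0 exprn_gt0 // ?invr_gt0 ltr0n.
- by rewrite exprn_gt0 // ltr0n.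
Qed.
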